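(* Let $M$ be a gasket automaton satisfying the $\gamma$-isolated condition with $\mathcal P_{\alpha\gamma}\cup\mathcal P_{\beta\gamma}\ne\emptyset$. Then there exists $(\tau,\kappa)\in\mathcal P_{\alpha\gamma}\cup\mathcal P_{\beta\gamma}$ such that $\kappa$ is double-maximal, i.e. $\kappa$ is both $\alpha\gamma$-maximal and $\beta\gamma$-maximal.
   Context: $\Sigma=\{1,\dots,N\}$. Triangle automaton: $\alpha,\beta,\gamma$ distinct elements of $\Sigma\cup\{-1,-2,-3\}$; states $S_{uv}$ ($u\ne v\in\{\alpha,\beta,\gamma\}$), $Id$, $Exit$; input alphabet $\Sigma^2$; transition $\delta$ with $\delta(Id,(i,j))=Id$ iff $i=j$; $\delta(Id,(i,j))=S_{uv}\Rightarrow\delta(Id,(j,i))=S_{vu}$; $\delta(S_{uv},(i,j))=S_{uv}$ if $(i,j)=(v,u)$, else $Exit$. $\mathcal P_{uv}=\{(i,j):\delta(Id,(i,j))=S_{uv}\}$; $i\triangleleft_{uv}j$ iff $(i,j)\in\mathcal P_{uv}$ (iff $j\triangleleft_{vu}i$); $j$ is $uv$-minimal if no $i\triangleleft_{uv}j$, $uv$-maximal if no $j\triangleleft_{uv}k$, $uv$-isolated if both. Gasket automaton: triangle automaton with (Uniqueness) $i\triangleleft_{uv}j,i\triangleleft_{uv}j'\Rightarrow j=j'$; (Gathering) any two of $a\triangleleft_{\alpha\gamma}c$, $a\triangleleft_{\beta\gamma}b$, $b\triangleleft_{\alpha\beta}c$ imply the third; (Boundary) if $\alpha\in\Sigma$ it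 is $\alpha\gamma$- and $\alpha\beta$-minimal; if $\beta\in\Sigma$ it is $\beta\gamma$- and $\beta\alpha$-minimal; if $\gamma\in\Sigma$ it is $\gamma\alpha$- and $\gamma\beta$-minimal. $\gamma$-isolated condition: $\alpha,\beta,\gamma\in\Sigma$; the directed graph $(\Sigma,\mathcal P_{\alpha\gamma}\cup\mathcal P_{\beta\gamma})$ has no directed cycle; $\gamma$ is $\alpha\gamma$-, $\beta\gamma$- and $\alpha\beta$-isolated. *)

From Stdlib Require Import ZArith.
Open Scope Z_scope.

Inductive state : Type := Id | Exit | Suv (u v : Z).

Definition inSigma (N i : Z) : Prop := 1 <= i <= N.
Definition inLab (N x : Z) : Prop := inSigma N x \/ x = -1 \/ x = -2 \/ x = -3.
Definition corner (al be ga u : Z) : Prop := u = al \/ u = be \/ u = ga.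

Record triangle_automaton (N al be ga : Z) (delta : state -> Z * Z -> state) : Prop := {
  ta_lab : inLab N al /\ inLab N be /\ inLab N ga;
  ta_dist : al <> be /\ be <> ga /\ al <> ga;
  ta_range : forall i j, inSigma N i -> inSigma N j ->
      delta Id (i, j) = Id \/ delta Id (i, j) = Exit \/
      exists u v, corner al be ga u /\ corner al be ga v /\ u <> v /\ delta Id (i, j) = Suv u v;
  ta_id : forall i j, inSigma N i -> inSigma N j -> (delta Id (i, j) = Id <-> i = j);
  ta_sym : forall i j u v, inSigma N i -> inSigma N j ->
      delta Id (i, j) = Suv u v -> delta Id (j, i) = Suv v u;
  ta_S : forall u v i j, corner al be ga u -> corner al be ga v -> u <> v ->
      inSigma N i -> inSigma N j ->
      delta (Suv u v) (i, j) = (if andb (i =? v) (j =? u) then Suv u v else Exit)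
}.

(* i <|_uv j  iff  (i,j) in P_uv *)
Definition tri (N : Z) (delta : state -> Z * Z -> state) (u v i j : Z) : Prop :=
  inSigma N i /\ inSigma N j /\ delta Id (i, j) = Suv u v.

Definition is_min N delta u v j : Prop := forall i, ~ tri N delta u v i j.
Definition is_max N delta u v j : Prop := forall k, ~ tri N delta u v j k.
Definition is_isolated N delta u v j : Prop := is_min N delta u v j /\ is_max N delta u v j.

Record gasket_automaton (N al be ga : Z) (delta : state -> Z * Z -> state) : Prop := {
  ga_tri : triangle_automaton N al be ga delta;
  ga_uniq : forall u v i j j', tri N delta u v i j -> tri N delta u v i j' -> j = j';
  ga_gather : forall a b c,
      (tri N delta al ga a c -> tri N delta be ga a b -> tri N delta al be b c) /\
      (tri N delta al ga a c -> tri N delta al be b c -> tri N delta be ga a b) /\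
      (tri N delta be ga a b -> tri N delta al be b c -> tri N delta al ga a c);
  ga_boundary :
      (inSigma N al -> is_min N delta al ga al /\ is_min N delta al be al) /\
      (inSigma N be -> is_min N delta be ga be /\ is_min N delta be al be) /\
      (inSigma N ga -> is_min N delta ga al ga /\ is_min N delta ga be ga)
}.

Definition has_cycle (E : Z -> Z -> Prop) : Prop :=
  exists (n : nat) (f : nat -> Z), (0 < n)%nat /\ f O = f n /\
    forall k, (k < n)%nat -> E (f k) (f (S k)).

Definition gamma_isolated (N al be ga : Z) (delta : state -> Z * Z -> state) : Prop :=
  inSigma N al /\ inSigma N be /\ inSigma N ga /\
  ~ has_cycle (fun x y => tri N delta al ga x y \/ tri N delta be ga x y) /\
  is_isolated N delta al ga ga /\ is_isolated N delta be ga ga /\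
  is_isolated N delta al be ga.

(* The graph (Sigma, P_{alpha gamma} ∪ P_{beta gamma}) is finite and acyclic.
   If no edge ended at a sink, one could follow edges forever starting from the
   given edge; a walk with more steps than there are letters repeats a vertex,
   and the segment between the two occurrences is a directed cycle. *)

From Stdlib Require Import ZArith List Lia Classical.
Open Scope Z_scope.

Lemma walk_repeats_vertex (A : Type) (V : list A) (f : nat -> A) (n : nat) :
  (forall i, (1 <= i <= n)%nat -> In (f i) V) ->
  (length V < n)%nat ->
  exists i j, (i < j <= n)%nat /\ f i = f j.
Proof.
  intros HV Hlen.
  apply NNPP; intro Hnorep.
  assert (Hnodup : NoDup (map f (seq 1 n))).
  { apply NoDup_map_NoDup_ForallPairs; [|apply seq_NoDup].
    intros a b Ha Hb Hab; apply in_seq in Ha, Hb.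
    destruct (Nat.lt_trichotomy a b) as [Hl|[Hl|Hl]]; trivial; exfalso; apply Hnorep.
    - exists a, b; split; [lia|exact Hab].
    - exists b, a; split; [lia|symmetry; exact Hab]. }
  assert (Hincl : incl (map f (seq 1 n)) V).
  { intros x Hx; apply in_map_iff in Hx as [i [<- Hi]]; apply in_seq in Hi.
    apply HV; lia. }
  pose proof (NoDup_incl_length Hnodup Hincl) as Hle.
  rewrite length_map, length_seq in Hle; lia.
Qed.

Lemma walks_of_any_length (A : Type) (E : A -> A -> Prop) (x0 y0 : A) :
  (forall x y, E x y -> exists z, E y z) -> E x0 y0 ->
  forall n, exists f : nat -> A, forall i, (i < S n)%nat -> E (f i) (f (S i)).
Proof.
  intros Hout H0; induction n as [|n [f Hf]].
  - exists (fun i => match i with O => x0 | _ => y0 end).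
    intros i Hi; replace i with O by lia; exact H0.
  - destruct (Hout _ _ (Hf n (Nat.lt_succ_diag_r n))) as [z Hz].
    exists (fun i => if (i <=? S n)%nat then f i else z).
    intros i Hi.
    destruct (Nat.eq_dec i (S n)) as [->|Hne].
    + rewrite Nat.leb_refl, (proj2 (Nat.leb_gt _ _) (Nat.lt_succ_diag_r _)); exact Hz.
    + rewrite (proj2 (Nat.leb_le i (S n))), (proj2 (Nat.leb_le (S i) (S n))) by lia.
      apply Hf; lia.
Qed.

Lemma walk_repeat_cycle (E : Z -> Z -> Prop) (f : nat -> Z) (i j : nat) :
  (forall k, (i <= k < j)%nat -> E (f k) (f (S k))) ->
  (i < j)%nat -> f i = f j -> has_cycle E.
Proof.
  intros Hwalk Hij Heq.
  exists (j - i)%nat, (fun k => f (i + k)%nat); repeat split.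
  - lia.
  - rewrite Nat.add_0_r; replace (i + (j - i))%nat with j by lia; exact Heq.
  - intros k Hk; rewrite Nat.add_succ_r; apply Hwalk; lia.
Qed.

Lemma acyclic_edge_to_sink (E : Z -> Z -> Prop) (V : list Z) (x0 y0 : Z) :
  ~ has_cycle E -> (forall x y, E x y -> In y V) -> E x0 y0 ->
  exists x y, E x y /\ forall z, ~ E y z.
Proof.
  intros Hacyc HV H0.
  apply NNPP; intro Hnosink.
  assert (Hout : forall x y, E x y -> exists z, E y z).
  { intros x y Hxy; apply NNPP; intro Hy; apply Hnosink.
    exists x, y; split; [exact Hxy|intros z Hz; apply Hy; exists z; exact Hz]. }
  destruct (walks_of_any_length _ E x0 y0 Hout H0 (length V)) as [f Hf].
  destruct (walk_repeats_vertex _ V f (S (length V))) as [i [j [Hij Heq]]].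
  - intros [|i] Hi; [lia|]; apply (HV (f i)), Hf; lia.
  - lia.
  - apply Hacyc, (walk_repeat_cycle E f i j); [intros k Hk; apply Hf; lia|lia|exact Heq].
Qed.

Lemma in_sigma_list (N x : Z) :
  inSigma N x -> In x (map Z.of_nat (seq 1 (Z.to_nat N))).
Proof.
  intros Hx; unfold inSigma in Hx.
  apply in_map_iff; exists (Z.to_nat x); split; [lia|apply in_seq; lia].
Qed.

Theorem lemma5p2 (N al be ga : Z) (delta : state -> Z * Z -> state) :
  gasket_automaton N al be ga delta ->
  gamma_isolated N al be ga delta ->
  (exists t k, tri N delta al ga t k \/ tri N delta be ga t k) ->
  exists tau kappa,
    (tri N delta al ga tau kappa \/ tri N delta be ga tau kappa) /\
    is_max N delta al ga kappa /\ is_max N delta be ga kappa.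
Proof.
  intros _ [_ [_ [_ [Hacyc _]]]] [t [k Htk]].
  destruct (acyclic_edge_to_sink _ (map Z.of_nat (seq 1 (Z.to_nat N))) t k Hacyc)
    as [tau [kappa [Hedge Hsink]]]; [|exact Htk|].
  - intros x y [[_ [Hy _]]|[_ [Hy _]]]; apply in_sigma_list; exact Hy.
  - exists tau, kappa; split; [exact Hedge|].
    split; intros z Hz; apply (Hsink z); [left|right]; exact Hz.
Qed.
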